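(* Let $G$ be a finite abelian group and let $n \in \mathbb{N}$. Let \[m= \max \{ \lfloor \lfloor \mathsf{D}(G\oplus C_n)/n \rfloor n/2 \rfloor,\ \lfloor \mathsf{D}(G)/n \rfloor n \}.\] Then $\mathsf{s}_{\le m} ( G )\le \mathsf{D} ( G \oplus C_n )$.
   Context: A sequence over a finite abelian group $H$ is a finite unordered list of elements of $H$ with repetitions; zero-sum means its terms sum to $0$. $\mathsf{D}(H)$ (the Davenport constant) is the smallest $\ell$ such that every sequence over $H$ of length at least $\ell$ has a non-empty zero-sum subsequence. For $m\in\mathbb{N}$, $\mathsf{s}_{\le m}(H)\in\mathbb{N}\cup\{\infty\}$ is the smallest $\ell$ such that every sequence over $H$ of length at least $\ell$ has a non-empty zero-sum subsequence of length at most $m$. $C_n$ is a cyclic group of order $n$. *)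

From HB Require Import structures.
From mathcomp Require Import all_boot all_algebra.
Set Implicit Arguments. Unset Strict Implicit. Unset Printing Implicit Defensive.
Import GRing.Theory.
Local Open Scope ring_scope.

(* Sequences over an additive abelian group H are represented by [seq H];
   "unordered" is harmless since the notions below are permutation invariant.
   A subsequence (sub-multiset) of s is any t with [subseq t s]. *)

Definition has_zs_sub_le (H : zmodType) (m : nat) (s : seq H) : Prop :=
  exists t : seq H, [/\ subseq t s, (0 < size t)%N, (size t <= m)%N
                      & \sum_(x <- t) x = 0].

Definition has_zs_sub (H : zmodType) (s : seq H) : Prop :=
  exists t : seq H, [/\ subseq t s, (0 < size t)%N & \sum_(x <- t) x = 0].

Definition is_least (P : nat -> Prop) (l : nat) : Prop :=
  P l /\ forall k, P k -> (l <= k)%N.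

Definition is_davenport (H : zmodType) (d : nat) : Prop :=
  is_least (fun l => forall s : seq H, (l <= size s)%N -> has_zs_sub s) d.

(* l = s_{<= m}(H), when this is finite; s_{<= m}(H) = oo iff no such l *)
Definition is_s_le (H : zmodType) (m l : nat) : Prop :=
  is_least (fun l => forall s : seq H, (l <= size s)%N -> has_zs_sub_le m s) l.

From mathcomp Require Import all_boot all_algebra.
From Stdlib Require Import Classical.
Set Implicit Arguments. Unset Strict Implicit. Unset Printing Implicit Defensive.
Import GRing.Theory.
Local Open Scope ring_scope.

(* Lift a sequence S over G with |S| >= D(G + C_n) to G + C_n by pairing every
   term with the generator of C_n.  A non-empty zero-sum subsequence of the
   lift is a zero-sum subsequence T of S whose length is a multiple of n and at
   most D(G + C_n), hence at most floor(D(G + C_n)/n) n.  If T is a minimal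
   zero-sum sequence, then |T| <= D(G) and so |T| <= floor(D(G)/n) n; otherwise
   T splits into two non-empty zero-sum parts, the shorter of length at most
   |T|/2. *)

Lemma is_least_exists (P : nat -> Prop) (k : nat) : P k -> exists l, is_least P l.
Proof.
elim: k {-2}k (leqnn k) => [|K IH] k le_kK Pk.
  by exists k; split=> // j _; move: le_kK; rewrite leqn0 => /eqP->.
case: (classic (exists j, (j < k)%N /\ P j)) => [[j [lt_jk Pj]]|no_smaller].
  by apply: (IH j) => //; rewrite -ltnS; apply: leq_trans lt_jk le_kK.
exists k; split=> // j Pj; rewrite leqNgt; apply/negP => lt_jk.
by apply: no_smaller; exists j.
Qed.

Lemma is_s_le_exists (H : zmodType) (m k : nat) :
    (forall s : seq H, (k <= size s)%N -> has_zs_sub_le m s) ->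
  exists l, is_s_le H m l /\ (l <= k)%N.
Proof.
move=> Pk; have [l [Pl l_min]] := @is_least_exists (fun l =>
  forall s : seq H, (l <= size s)%N -> has_zs_sub_le m s) k Pk.
by exists l; split; [split | apply: l_min].
Qed.

Lemma subseq_complement (T : eqType) (u s : seq T) :
  subseq u s -> exists2 v, subseq v s & perm_eq s (u ++ v).
Proof.
case/perm_to_subseq=> w s_uw.
have /count_subseqP[v sub_vs w_v] : forall x, (count_mem x w <= count_mem x s)%N.
  by move=> x; rewrite (permP s_uw) count_cat leq_addl.
by exists v => //; apply: perm_trans s_uw _; rewrite perm_cat2l.
Qed.

Lemma zero_sum_split (A : zmodType) (u s : seq A) :
    subseq u s -> \sum_(x <- s) x = 0 -> \sum_(x <- u) x = 0 ->
  exists2 v, subseq v s &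
    [/\ (size u + size v)%N = size s & \sum_(x <- v) x = 0].
Proof.
move=> /subseq_complement[v sub_vs s_uv] sum_s sum_u; exists v => //; split.
  by rewrite (perm_size s_uv) size_cat.
by move: sum_s; rewrite (perm_big _ s_uv) big_cat /= sum_u add0r.
Qed.

Lemma sum_pair_const (A B : zmodType) (b : B) (t : seq A) :
  \sum_(x <- [seq (a, b) | a <- t]) x = (\sum_(a <- t) a, b *+ size t).
Proof.
elim: t => [|a t IH]; first by rewrite !big_nil.
by rewrite /= !big_cons IH mulrS.
Qed.

Lemma Zp1_mulrn_eq0 (n k : nat) : (Zp1 *+ k == 0 :> 'I_n.+1) = (n.+1 %| k)%N.
Proof. by rewrite -val_eqE Zp_mulrn /= modnMml mul1n. Qed.

Lemma leq_trunc_mult (n k d : nat) :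
  (n %| k)%N -> (k <= d)%N -> (k <= d %/ n * n)%N.
Proof. by move=> /divnK def_k le_kd; rewrite -def_k leq_mul2r leq_div2r ?orbT. Qed.

Section ZeroSumSubsequences.

Variable G : zmodType.

Lemma zero_sum_subseq_dvd (n d : nat) (s : seq G) :
    is_davenport (G * 'I_n.+1)%type d -> (d <= size s)%N ->
  exists t, [/\ subseq t s, (0 < size t)%N, (size t <= d)%N, (n.+1 %| size t)%N
              & \sum_(x <- t) x = 0].
Proof.
move=> [Dd _] le_ds.
have size_lift : (d <= size [seq (g, Zp1 : 'I_n.+1) | g <- take d s])%N.
  by rewrite size_map size_take_min leq_min leqnn.
have [_ [/subseqP[mk _ ->] lift_gt0 lift_sum0]] := Dd _ size_lift.
rewrite -map_mask size_map in lift_gt0 lift_sum0 *.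
rewrite sum_pair_const in lift_sum0; case: lift_sum0 => sum0 /eqP.
rewrite Zp1_mulrn_eq0 => dvd_t.
exists (mask mk (take d s)); split=> //.
- exact: subseq_trans (mask_subseq _ _) (take_subseq _ _).
- by apply: leq_trans (size_subseq (mask_subseq _ _)) _; rewrite size_take_min geq_minl.
Qed.

Lemma has_zs_sub_le_subseq (m : nat) (t s : seq G) :
  subseq t s -> has_zs_sub_le m t -> has_zs_sub_le m s.
Proof.
by move=> sub_ts [u [sub_ut ? ? ?]]; exists u; split=> //; apply: subseq_trans sub_ts.
Qed.

Lemma has_zs_sub_le_split (t u : seq G) :
    subseq u t -> (0 < size u)%N -> (size u < size t)%N ->
    \sum_(x <- t) x = 0 -> \sum_(x <- u) x = 0 ->
  has_zs_sub_le (size t %/ 2) t.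
Proof.
move=> sub_ut u_gt0 lt_ut sum_t sum_u.
have [v sub_vt [size_uv sum_v]] := zero_sum_split sub_ut sum_t sum_u.
have half_le (w : seq G) : (2 * size w <= size t)%N -> (size w <= size t %/ 2)%N.
  by rewrite leq_divRL // mulnC.
have [le_uv|lt_vu] := leqP (size u) (size v).
  exists u; split=> //; apply: half_le; rewrite mul2n -addnn -size_uv leq_add2l //.
exists v; split=> //.
- by rewrite -(ltn_add2l (size u)) size_uv addn0.
- by apply: half_le; rewrite mul2n -addnn -size_uv leq_add2r ltnW.
Qed.

Lemma minimal_zero_sum_size (dG : nat) (t : seq G) :
    is_davenport G dG -> (0 < size t)%N ->
    ~ (exists u, [/\ subseq u t, (0 < size u)%N, (size u < size t)%N
                   & \sum_(x <- u) x = 0]) ->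
  (size t <= dG)%N.
Proof.
move=> [DdG _] t_gt0 t_minimal; rewrite leqNgt; apply/negP => lt_dG_t.
have /DdG[u [sub_u u_gt0 sum_u]] : (dG <= size (behead t))%N.
  by rewrite size_behead -ltnS prednK.
apply: t_minimal; exists u; split=> //.
  by apply: subseq_trans sub_u _; case: (t) => //= x r; apply: subseq_cons.
by apply: leq_ltn_trans (size_subseq sub_u) _; rewrite size_behead prednK.
Qed.

Lemma zero_sum_halve_or_minimal (dG : nat) (t : seq G) :
    is_davenport G dG -> (0 < size t)%N -> \sum_(x <- t) x = 0 ->
  has_zs_sub_le (size t %/ 2) t \/ (size t <= dG)%N.
Proof.
move=> DdG t_gt0 sum_t.
case: (classic (exists u, [/\ subseq u t, (0 < size u)%N, (size u < size t)%N
                            & \sum_(x <- u) x = 0])).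
  by case=> u [sub_ut u_gt0 lt_ut sum_u]; left; apply: has_zs_sub_le_split sum_u.
by move/(minimal_zero_sum_size DdG t_gt0); right.
Qed.

End ZeroSumSubsequences.

Theorem lemma3p4 (G : finZmodType) (n : nat) (hn : (0 < n)%N)
    (dG dGn : nat)
    (hdG : is_davenport G dG)
    (hdGn : is_davenport (G * 'I_(n.-1.+1))%type dGn) :
  let m := maxn ((dGn %/ n * n) %/ 2) (dG %/ n * n) in
  exists s : nat, is_s_le G m s /\ (s <= dGn)%N.
Proof.
move=> m; apply: is_s_le_exists => s le_dGn_s.
have [t [sub_ts t_gt0 le_t_dGn]] := zero_sum_subseq_dvd hdGn le_dGn_s.
rewrite prednK // => dvd_t sum_t.
have le_t_trunc := leq_trunc_mult dvd_t le_t_dGn.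
apply: has_zs_sub_le_subseq sub_ts _.
case: (zero_sum_halve_or_minimal hdG t_gt0 sum_t) => [[w [sub_wt w_gt0 le_w sum_w]]|le_t_dG].
  exists w; split=> //; apply: leq_trans le_w (leq_trans _ (leq_maxl _ _)).
  exact: leq_div2r le_t_trunc.
exists t; split=> //; apply: leq_trans (leq_maxr _ _).
exact: leq_trunc_mult dvd_t le_t_dG.
Qed.
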